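(* Let $n \geq 0$ and $k \geq 1$ be integers and let $p=(p_1,p_2)$ be a probability distribution on two bins. Let $M_n$ be the maximum load of the two bins when $n$ balls are thrown independently, each landing in bin $i$ with probability $p_i$. Let $p' = (1-\|p\|_k,\ \|p\|_k)$, where $\|p\|_k = (p_1^k+p_2^k)^{1/k}$, and let $M'_n$ be the load of bin $2$ when $n$ balls are thrown independently according to $p'$. Then $\Pr[M_n \geq k] \geq \Pr[M'_n \geq k]$.
   Context: The load of a bin is the number of balls that landed in it. *)

From HB Require Import structures.
From mathcomp Require Import all_boot all_order all_algebra.
From mathcomp Require Import reals exp.
Set Implicit Arguments. Unset Strict Implicit. Unset Printing Implicit Defensive.
Import Order.TTheory GRing.Theory Num.Theory.
Local Open Scope ring_scope.

(* Bins are 'I_2: bin 1 is ord0, bin 2 is ord_max (value 1). *)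
Definition dist2 {R : realType} (a b : R) : 'I_2 -> R :=
  fun i => if val i == 0%N then a else b.

(* An outcome of throwing n balls: ball j lands in bin f j. Balls are
   independent, so its probability is the product of the bin probabilities. *)
Definition outcome_prob {R : realType} (n : nat) (q : 'I_2 -> R)
  (f : {ffun 'I_n -> 'I_2}) : R := \prod_(j < n) q (f j).

Definition load (n : nat) (f : {ffun 'I_n -> 'I_2}) (b : 'I_2) : nat :=
  #|[set j | f j == b]|.

Definition max_load (n : nat) (f : {ffun 'I_n -> 'I_2}) : nat :=
  maxn (load f ord0) (load f ord_max).

Definition Pr_maxload_ge {R : realType} (n : nat) (q : 'I_2 -> R) (k : nat) : R :=
  \sum_(f : {ffun 'I_n -> 'I_2} | (k <= max_load f)%N) outcome_prob q f.

Definition Pr_load2_ge {R : realType} (n : nat) (q : 'I_2 -> R) (k : nat) : R :=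
  \sum_(f : {ffun 'I_n -> 'I_2} | (k <= load f ord_max)%N) outcome_prob q f.

Definition knorm {R : realType} (k : nat) (p1 p2 : R) : R :=
  powR (p1 ^+ k + p2 ^+ k) (k%:R)^-1.

From HB Require Import structures.
From mathcomp Require Import all_boot all_order all_algebra.
From mathcomp Require Import reals exp.
From mathcomp Require Import ring lra zify.
Import Order.TTheory GRing.Theory Num.Theory.
Local Open Scope ring_scope.

(* If 2k <= n + 1, one of the two bins always receives at least k balls, so
   the right-hand side is 1.  Otherwise the events "bin 1 receives >= k balls"
   and "bin 2 receives >= k balls" are disjoint, so Pr[M_n >= k] = T(p1) + T(p2)
   with T(x) = Pr[Bin(n, x) >= k].  Counting by the trial j at which the k-th
   success occurs, T(x) = x^k G(x) with G(x) = sum_(k <= j <= n) C(j-1, k-1)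
   (1 - x)^(j-k), which is nonincreasing in x.  For q = ||p||_k we have
   p1, p2 <= q and q^k = p1^k + p2^k, hence
   T(q) = p1^k G(q) + p2^k G(q) <= p1^k G(p1) + p2^k G(p2) = T(p1) + T(p2). *)

Section BinomialTail.
Context {R : comPzRingType}.
Implicit Types (x : R) (n j k : nat).

Definition binom_pmf x n j : R := 'C(n, j)%:R * x ^+ j * (1 - x) ^+ (n - j).

Definition binom_tail x n k : R := \sum_(k <= j < n.+1) binom_pmf x n j.

Definition binom_tail_quot x n k : R :=
  \sum_(k <= j < n.+1) 'C(j.-1, k.-1)%:R * (1 - x) ^+ (j - k).

Lemma binom_pmf_small x n j : (n < j)%N -> binom_pmf x n j = 0.
Proof. by move=> ltnj; rewrite /binom_pmf bin_small // !mul0r. Qed.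

Lemma binom_pmfS x n j :
  binom_pmf x n.+1 j.+1 = (1 - x) * binom_pmf x n j.+1 + x * binom_pmf x n j.
Proof.
rewrite /binom_pmf binS natrD subSS.
have [ltjn | lenj] := ltnP j n.
  by rewrite -(subnSK ltjn) !exprS; ring.
by rewrite bin_small ?ltnS // exprS; ring.
Qed.

Lemma binom_tail_mkord x n k :
  binom_tail x n k = \sum_(j < n.+1 | (k <= j)%N) binom_pmf x n j.
Proof. by rewrite /binom_tail big_geq_mkord. Qed.

Lemma binom_tailSn x n k :
  binom_tail x n.+1 k.+1 = binom_tail x n k.+1 + x * binom_pmf x n k.
Proof.
have [lekn | ltnk] := leqP k n; last first.
  have lenk := ltnW ltnk.
  by rewrite /binom_tail !big_geq // binom_pmf_small // mulr0 addr0.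
rewrite /binom_tail big_add1 /=.
under eq_bigr do rewrite binom_pmfS.
rewrite big_split /= -!mulr_sumr big_nat_recr //= binom_pmf_small // addr0.
rewrite [in X in _ + x * X]big_ltn ?ltnS // big_add1 /=.
by ring.
Qed.

Lemma binom_tail_quotSn x n k :
  binom_tail_quot x n.+1 k.+1 =
  binom_tail_quot x n k.+1 + 'C(n, k)%:R * (1 - x) ^+ (n - k).
Proof.
have [lekn | ltnk] := leqP k n; last first.
  have lenk := ltnW ltnk.
  by rewrite /binom_tail_quot !big_geq // bin_small // mul0r addr0.
by rewrite /binom_tail_quot big_nat_recr.
Qed.

Lemma binom_tailE x n k :
  (0 < k)%N -> binom_tail x n k = x ^+ k * binom_tail_quot x n k.
Proof.
case: k => // k _; elim: n => [|n IHn].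
  by rewrite /binom_tail /binom_tail_quot !big_geq // mulr0.
rewrite binom_tailSn binom_tail_quotSn IHn /binom_pmf.
by rewrite !exprS; ring.
Qed.

End BinomialTail.

Section BinomialTailMonotone.
Variable R : realDomainType.

Lemma le_binom_tail_quot (x y : R) n k :
  x <= y -> y <= 1 -> binom_tail_quot y n k <= binom_tail_quot x n k.
Proof.
move=> lexy ley1; apply: ler_sum => j _; apply: ler_wpM2l; first exact: ler0n.
by apply: lerXn2r; rewrite ?nnegrE; lra.
Qed.

Lemma binom_tail_le_add (p1 p2 q : R) n k : (0 < k)%N ->
  0 <= p1 -> 0 <= p2 -> p1 <= q -> p2 <= q -> q <= 1 ->
  q ^+ k = p1 ^+ k + p2 ^+ k ->
  binom_tail q n k <= binom_tail p1 n k + binom_tail p2 n k.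
Proof.
move=> k_gt0 p1_ge0 p2_ge0 le_p1q le_p2q le_q1 qk.
rewrite !binom_tailE // qk mulrDl.
by apply: lerD; apply: ler_wpM2l; rewrite ?exprn_ge0 ?le_binom_tail_quot.
Qed.

End BinomialTailMonotone.

Section KNorm.
Variables (R : realType) (k : nat).
Hypothesis k_gt0 : (0 < k)%N.

Lemma knormC (p1 p2 : R) : knorm k p1 p2 = knorm k p2 p1.
Proof. by rewrite /knorm addrC. Qed.

Lemma knorm_ge0 (p1 p2 : R) : 0 <= knorm k p1 p2.
Proof. exact: powR_ge0. Qed.

Lemma knorm_expr (p1 p2 : R) : 0 <= p1 -> 0 <= p2 ->
  knorm k p1 p2 ^+ k = p1 ^+ k + p2 ^+ k.
Proof.
move=> p1_ge0 p2_ge0; rewrite -powR_mulrn ?knorm_ge0 // /knorm -powRrM.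
by rewrite mulVf ?powRr1 ?addr_ge0 ?exprn_ge0 // pnatr_eq0 -lt0n.
Qed.

Lemma ler_knorml (p1 p2 : R) : 0 <= p1 -> 0 <= p2 -> p1 <= knorm k p1 p2.
Proof.
move=> p1_ge0 p2_ge0; rewrite -(ler_pXn2r k_gt0) ?nnegrE ?knorm_ge0 //.
by rewrite knorm_expr // lerDl exprn_ge0.
Qed.

Lemma knorm_le1 (p1 p2 : R) : 0 <= p1 -> 0 <= p2 -> p1 + p2 <= 1 ->
  knorm k p1 p2 <= 1.
Proof.
move=> p1_ge0 p2_ge0 p12_le1.
rewrite -(expr_le1 k_gt0) ?knorm_ge0 // knorm_expr //.
have /(ler_iXnr k_gt0 p1_ge0) : p1 <= 1 by lra.
have /(ler_iXnr k_gt0 p2_ge0) : p2 <= 1 by lra.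
lra.
Qed.

End KNorm.

Section Outcomes.
Variables (R : realType) (n : nat).
Implicit Type f : {ffun 'I_n -> 'I_2}.

Lemma load_le f b : (load f b <= n)%N.
Proof. by rewrite -[leqRHS]card_ord max_card. Qed.

Lemma load_ord0 f : load f ord0 = (n - load f ord_max)%N.
Proof.
rewrite /load; set A := [set j | f j == ord_max].
have -> : [set j | f j == ord0] = ~: A.
  by apply/setP => j; rewrite !inE; case: (f j) => [[|[|]]].
by have := cardsC A; rewrite card_ord; lia.
Qed.

Definition outcome_of_set (A : {set 'I_n}) : {ffun 'I_n -> 'I_2} :=
  [ffun j => if j \in A then ord_max else ord0].

Lemma load_outcome_of_set A : load (outcome_of_set A) ord_max = #|A|.
Proof. by apply: eq_card => j; rewrite inE ffunE; case: (j \in A). Qed.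

Lemma outcome_prob_of_set (a b : R) A :
  outcome_prob (dist2 a b) (outcome_of_set A) = b ^+ #|A| * a ^+ (n - #|A|).
Proof.
rewrite /outcome_prob (bigID (mem A)) /=.
rewrite (eq_bigr (fun _ => b)) => [|j Aj]; last by rewrite ffunE Aj.
rewrite [X in _ * X](eq_bigr (fun _ => a)) => [|j nAj]; last first.
  by rewrite ffunE (negbTE nAj).
rewrite !prodr_const; congr (_ * _ ^+ _).
have := cardC A; rewrite card_ord => cardA.
by rewrite -[X in (X - _)%N]cardA addKn.
Qed.

Lemma sum_outcome_prob_load2 (a b : R) (P : pred nat) : a + b = 1 ->
  \sum_(f : {ffun 'I_n -> 'I_2} | P (load f ord_max)) outcome_prob (dist2 a b) f
  = \sum_(j < n.+1 | P j) binom_pmf b n j.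
Proof.
move=> ab1; rewrite (reindex outcome_of_set); last first.
  exists (fun f => [set j | f j == ord_max]) => [A _ | f _].
    by apply/setP => j; rewrite inE ffunE; case: (j \in A).
  apply/ffunP => j; rewrite ffunE inE.
  by case: (f j) => [[|[|]]] //= ?; apply: val_inj.
have card_lt (A : {set 'I_n}) : (#|A| < n.+1)%N.
  by rewrite ltnS -[leqRHS]card_ord max_card.
under eq_bigl do rewrite load_outcome_of_set.
under eq_bigr do rewrite outcome_prob_of_set.
rewrite (partition_big (fun A : {set 'I_n} => inord #|A| : 'I_n.+1)
                      (fun j : 'I_n.+1 => P j)) /=; last first.
  by move=> A PA; rewrite inordK.
apply: eq_bigr => j Pj.
rewrite (eq_bigl (fun A => A \in [set A : {set 'I_n} | #|A| == j])); last first.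
  move=> A; rewrite !inE; apply/idP/idP => [/andP[_ /eqP <-] | /eqP Aj].
    by rewrite inordK.
  by rewrite Aj Pj inord_val eqxx.
rewrite (eq_bigr (fun _ => b ^+ j * a ^+ (n - j))) => [|A]; last first.
  by rewrite in_set => /eqP ->.
have a_eq : a = 1 - b by lra.
by rewrite sumr_const card_draws card_ord /binom_pmf -a_eq -mulrA mulr_natl.
Qed.

Lemma sum_outcome_prob_load1 (a b : R) (P : pred nat) : a + b = 1 ->
  \sum_(f : {ffun 'I_n -> 'I_2} | P (load f ord0)) outcome_prob (dist2 a b) f
  = \sum_(j < n.+1 | P j) binom_pmf a n j.
Proof.
move=> ab1; under eq_bigl do rewrite load_ord0.
rewrite (@sum_outcome_prob_load2 a b (fun j => P (n - j)%N) ab1).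
rewrite (reindex_inj rev_ord_inj) /=; apply: eq_big => j.
  by rewrite subSS subKn // -ltnS.
move=> _; have le_jn : (j <= n)%N by rewrite -ltnS.
rewrite /binom_pmf subSS subKn // bin_sub //.
have -> : 1 - b = a by lra.
have -> : 1 - a = b by lra.
by rewrite mulrAC.
Qed.

Lemma sum_outcome_prob (q : 'I_2 -> R) :
  \sum_(f : {ffun 'I_n -> 'I_2}) outcome_prob q f = (\sum_i q i) ^+ n.
Proof.
rewrite /outcome_prob -(bigA_distr_bigA (fun (_ : 'I_n) (i : 'I_2) => q i)) /=.
by rewrite prodr_const card_ord.
Qed.

Lemma sum_outcome_prob_dist2 (a b : R) : a + b = 1 ->
  \sum_(f : {ffun 'I_n -> 'I_2}) outcome_prob (dist2 a b) f = 1.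
Proof. by move=> ab1; rewrite sum_outcome_prob big_ord_recl big_ord1 ab1 expr1n. Qed.

Lemma Pr_load2_ge_dist2 (a b : R) k : a + b = 1 ->
  Pr_load2_ge n (dist2 a b) k = binom_tail b n k.
Proof.
by move=> ab1; rewrite /Pr_load2_ge sum_outcome_prob_load2 // binom_tail_mkord.
Qed.

Lemma Pr_load2_ge_le1 (a b : R) k : 0 <= a -> 0 <= b -> a + b = 1 ->
  Pr_load2_ge n (dist2 a b) k <= 1.
Proof.
move=> a_ge0 b_ge0 ab1; rewrite -(sum_outcome_prob_dist2 _ _ ab1).
rewrite [leRHS](bigID (fun f => k <= load f ord_max)%N) /=.
rewrite lerDl sumr_ge0 // => f _; apply: prodr_ge0 => j _.
by rewrite /dist2; case: ifP.
Qed.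

Lemma Pr_maxload_ge_eq1 (a b : R) k : (k.*2 <= n.+1)%N -> a + b = 1 ->
  Pr_maxload_ge n (dist2 a b) k = 1.
Proof.
move=> le_2k_n ab1; rewrite -(sum_outcome_prob_dist2 _ _ ab1) /Pr_maxload_ge.
apply: eq_bigl => f; rewrite /max_load load_ord0.
by have := load_le f ord_max; lia.
Qed.

Lemma Pr_maxload_ge_disjoint (a b : R) k : (n.+1 < k.*2)%N -> a + b = 1 ->
  Pr_maxload_ge n (dist2 a b) k = binom_tail a n k + binom_tail b n k.
Proof.
move=> lt_n_2k ab1; have le_load2 f := load_le f ord_max.
rewrite /Pr_maxload_ge (bigID (fun f => k <= load f ord_max)%N) /=.
rewrite [X in X + _](eq_bigl (fun f => k <= load f ord_max)%N) => [|f]; last first.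
  by rewrite /max_load leq_max andb_idl // => ->; rewrite orbT.
rewrite [X in _ + X](eq_bigl (fun f => k <= load f ord0)%N) => [|f]; last first.
  by rewrite /max_load load_ord0; have := le_load2 f; lia.
rewrite sum_outcome_prob_load1 // sum_outcome_prob_load2 // -!binom_tail_mkord.
by rewrite addrC.
Qed.

End Outcomes.

Theorem lemma10 (R : realType) (n k : nat) (p1 p2 : R) :
  (1 <= k)%N -> 0 <= p1 -> 0 <= p2 -> p1 + p2 = 1 ->
  Pr_load2_ge n (dist2 (1 - knorm k p1 p2) (knorm k p1 p2)) k
    <= Pr_maxload_ge n (dist2 p1 p2) k.
Proof.
move=> k_gt0 p1_ge0 p2_ge0 p12.
have q_le1 : knorm k p1 p2 <= 1 by rewrite knorm_le1 // p12.
have [lt_n_2k | le_2k_n] := ltnP n.+1 k.*2.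
  rewrite Pr_load2_ge_dist2 ?subrK // Pr_maxload_ge_disjoint //.
  apply: binom_tail_le_add; rewrite ?knorm_expr ?ler_knorml //.
  by rewrite knormC ler_knorml.
rewrite Pr_maxload_ge_eq1 // Pr_load2_ge_le1 ?subrK ?knorm_ge0 //.
by rewrite subr_ge0.
Qed.
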